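(* The transfinite sequence $\langle (T_\alpha,P_\alpha)\rangle_{\alpha\in\mathrm{On}}$ defined by $(T_0,P_0)=((\emptyset,\emptyset),(\emptyset,\emptyset))$, $(T_{\beta+1},P_{\beta+1})=\Gamma_{\mathscr{TP}}(T_\beta,P_\beta)$ and $(T_\lambda,P_\lambda)=\bigcup_{\beta<\lambda}(T_\beta,P_\beta)$ for limit $\lambda$ reaches a fixed point, i.e. a pair $(T_\infty,P_\infty)$ in the sequence with $\Gamma_{\mathscr{TP}}(T_\infty,P_\infty)=(T_\infty,P_\infty)$; moreover $(T_\infty,P_\infty)$ is the least fixed point of $\Gamma_{\mathscr{TP}}$ with respect to the componentwise inclusion order.
   Context: Language. Let $\mathcal L_{\mathbb N}$ be the language of first-order Peano arithmetic and $\mathcal L=\mathcal L_{\mathbb N}\cup\{\mathrm T,\mathrm P\}$ with unary predicates $\mathrm T,\mathrm P$. $\mathcal L$-formulas are in Tait style: literals are $s=t$, $s\neq t$, $\mathrm Tt$, $\neg\mathrm Tt$, $\mathrm Pt$, $\neg\mathrm Pt$; formulas are built from literals by $\wedge,\vee,\forall,\exists$; negation of an arbitrary formula is defined by De Morgan dualities with $\neg\neg\varphi:=\varphi$. A standard Gödel numbering is fixed; $\#e$ is the code of $e$, $\ulcorner e\urcorner$ the numeral of $\#e$, $\mathrm{val}(t)$ the value of a closed term $t$, $\dot\neg$ the primitive recursive function with $\dot\neg(\#\varphi)=\#\neg\varphi$; $\mathrm T\varphi,\mathrm P\varphi$ abbreviate $\mathrm T\ulcorner\varphi\urcorner,\mathrm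 P\ulcorner\varphi\urcorner$. Semantics. A partial model is $(\mathbb N,T,P)$ with $\mathbb N$ the standard model and $T=(T^+,T^-)$, $P=(P^+,P^-)$ pairs of subsets of $\omega$. Strong Kleene satisfaction $\models_{SK}$: arithmetic literals evaluated in $\mathbb N$; $\mathrm Tt$ satisfied iff $\mathrm{val}(t)\in T^+$, $\neg\mathrm Tt$ iff $\mathrm{val}(t)\in T^-$, likewise for $\mathrm P$ with $P^\pm$; conjunction iff both, disjunction iff at least one, $\forall x\varphi(x)$ iff all numeral instances, $\exists x\varphi(x)$ iff some numeral instance. Base paradoxicality. $\mathrm{PA}[\mathrm{SK}]$ is the two-sided sequent calculus for Strong Kleene logic with identity in $\mathcal L$ (initial sequents $\varphi\Rightarrow\varphi$, cut, weakening, the rule from $\Gamma\Rightarrow\Delta,\varphi$ infer $\neg\varphi,\Gamma\Rightarrow\Delta$, usual rules for $\wedge,\vee,\forall,\exists$, reflexivity $\Rightarrow t=t$, replacement from $\Gamma\Rightarrow\Delta,\varphi(t)$ infer $\Gamma\Rightarrow\Delta,s\neq t,\varphi(s)$) plus the initial sequents of Peano arithmetic and the induction rule for all $\mathcal L$-formulas. A sentence $\varphi$ is base paradoxical iff $\mathrm{PA}[\mathrm{SK}]$ derives $\varphi\Leftrightarrow\neg\mathrm T\varphi$ and $\neg\varphi\Leftrightarrow\mathrm T\varphi$ (where $\Leftrightarrow$ denotes derivability of both sequents). $B(x)$ is an $\mathcal L_{\mathbb N}$-formula defining in $\mathbb N$ the set of codes of base paradoxical sentences, and $\Pi(x):=B(x)\vee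 B(\dot\neg x)$. Jump. Let $\mathscr P(x)$ be the $\mathcal L$-formula which is the disjunction of: (1) $x$ codes a sentence and $\Pi(x)$; (2) $x$ codes a sentence $\mathrm Tt$ ($t$ a closed term) and $\mathrm P(\mathrm{val}(t))$; (3) $x$ codes a sentence $\neg\mathrm Tt$ and $\mathrm P(\mathrm{val}(t))$; (4) $x$ codes a sentence $\psi\wedge\theta$ and $(\mathrm P\psi\wedge\mathrm P\theta)\vee(\mathrm T\psi\wedge\mathrm P\theta)\vee(\mathrm T\theta\wedge\mathrm P\psi)$; (5) $x$ codes a sentence $\psi\vee\theta$ and $(\mathrm P\psi\wedge\mathrm P\theta)\vee(\neg\mathrm T\psi\wedge\mathrm P\theta)\vee(\neg\mathrm T\theta\wedge\mathrm P\psi)$; (6) $x$ codes a sentence $\forall v\psi$ and $\exists y\,\mathrm P\psi(\dot y)\wedge\forall y(\mathrm P\psi(\dot y)\vee\mathrm T\psi(\dot y))$; (7) $x$ codes a sentence $\exists v\psi$ and $\exists y\,\mathrm P\psi(\dot y)\wedge\forall y(\mathrm P\psi(\dot y)\vee\neg\mathrm T\psi(\dot y))$; here $\psi(\dot y)$ is the code of the result of substituting the numeral of $y$ for $v$. Write $\mathscr P(\varphi)$ for $\mathscr P(\ulcorner\varphi\urcorner)$. Define $\Gamma_{\mathscr{TP}}(T,P)=\big((\{\#\varphi:(\mathbb N,T,P)\models_{SK}\varphi\},\{\#\varphi:(\mathbb N,T,P)\models_{SK}\neg\varphi\}),(\{\#\varphi:(\mathbb N,T,P)\models_{SK}\mathscr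 P(\varphi)\},\{\#\varphi:(\mathbb N,T,P)\models_{SK}\varphi\vee\neg\varphi\})\big)$, $\varphi$ ranging over $\mathcal L$-sentences. Order: $(X,Y)\le(X',Y')$ iff $X\subseteq X'$ and $Y\subseteq Y'$; $(T,P)\le(T',P')$ iff $T\le T'$ and $P\le P'$; unions are componentwise. *)

From mathcomp Require Import all_boot.
From Stdlib Require List.
Set Implicit Arguments. Unset Strict Implicit. Unset Printing Implicit Defensive.

Inductive term : Type :=
| tVar (n : nat) | tZero | tSucc (t : term) | tAdd (s t : term) | tMul (s t : term).

Inductive form : Type :=
| fEq (s t : term) | fNeq (s t : term)
| fT (t : term) | fNT (t : term)
| fP (t : term) | fNP (t : term)
| fAnd (a b : form) | fOr (a b : form)
| fAll (v : nat) (a : form) | fEx (v : nat) (a : form).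

Fixpoint fneg (a : form) : form :=
  match a with
  | fEq s t => fNeq s t | fNeq s t => fEq s t
  | fT t => fNT t | fNT t => fT t
  | fP t => fNP t | fNP t => fP t
  | fAnd a b => fOr (fneg a) (fneg b) | fOr a b => fAnd (fneg a) (fneg b)
  | fAll v a => fEx v (fneg a) | fEx v a => fAll v (fneg a)
  end.

Fixpoint tvars (t : term) : seq nat :=
  match t with
  | tVar n => [:: n] | tZero => [::] | tSucc t => tvars t
  | tAdd s t | tMul s t => tvars s ++ tvars t
  end.

(* value of a (closed) term in the standard model *)
Fixpoint tval (t : term) : nat :=
  match t with
  | tVar _ => 0 | tZero => 0 | tSucc t => (tval t).+1
  | tAdd s t => tval s + tval t | tMul s t => tval s * tval t
  end.

Fixpoint numeral (n : nat) : term :=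
  match n with 0 => tZero | n'.+1 => tSucc (numeral n') end.

Fixpoint tsubst (x : nat) (u t : term) : term :=
  match t with
  | tVar n => if n == x then u else tVar n
  | tZero => tZero | tSucc t => tSucc (tsubst x u t)
  | tAdd s t => tAdd (tsubst x u s) (tsubst x u t)
  | tMul s t => tMul (tsubst x u s) (tsubst x u t)
  end.

Fixpoint subst (x : nat) (u : term) (a : form) : form :=
  match a with
  | fEq s t => fEq (tsubst x u s) (tsubst x u t)
  | fNeq s t => fNeq (tsubst x u s) (tsubst x u t)
  | fT t => fT (tsubst x u t) | fNT t => fNT (tsubst x u t)
  | fP t => fP (tsubst x u t) | fNP t => fNP (tsubst x u t)
  | fAnd a b => fAnd (subst x u a) (subst x u b)
  | fOr a b => fOr (subst x u a) (subst x u b)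
  | fAll v a => if v == x then fAll v a else fAll v (subst x u a)
  | fEx v a => if v == x then fEx v a else fEx v (subst x u a)
  end.

Fixpoint fv (a : form) : seq nat :=
  match a with
  | fEq s t | fNeq s t => tvars s ++ tvars t
  | fT t | fNT t | fP t | fNP t => tvars t
  | fAnd a b | fOr a b => fv a ++ fv b
  | fAll v a | fEx v a => [seq y <- fv a | y != v]
  end.

Definition fvs (G : seq form) : seq nat := flatten (map fv G).

Definition sentence (a : form) : Prop := fv a = [::].

Fixpoint free_for (u : term) (x : nat) (a : form) : bool :=
  match a with
  | fAnd a b | fOr a b => free_for u x a && free_for u x b
  | fAll v b | fEx v b =>
      (x \notin fv a) || ((v \notin tvars u) && free_for u x b)
  | _ => true
  end.

Fixpoint term_tree (t : term) : GenTree.tree nat :=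
  match t with
  | tVar n => GenTree.Node 0 [:: GenTree.Leaf n]
  | tZero => GenTree.Node 1 [::]
  | tSucc t => GenTree.Node 2 [:: term_tree t]
  | tAdd s t => GenTree.Node 3 [:: term_tree s; term_tree t]
  | tMul s t => GenTree.Node 4 [:: term_tree s; term_tree t]
  end.

Fixpoint form_tree (a : form) : GenTree.tree nat :=
  match a with
  | fEq s t => GenTree.Node 5 [:: term_tree s; term_tree t]
  | fNeq s t => GenTree.Node 6 [:: term_tree s; term_tree t]
  | fT t => GenTree.Node 7 [:: term_tree t]
  | fNT t => GenTree.Node 8 [:: term_tree t]
  | fP t => GenTree.Node 9 [:: term_tree t]
  | fNP t => GenTree.Node 10 [:: term_tree t]
  | fAnd a b => GenTree.Node 11 [:: form_tree a; form_tree b]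
  | fOr a b => GenTree.Node 12 [:: form_tree a; form_tree b]
  | fAll v a => GenTree.Node 13 [:: GenTree.Leaf v; form_tree a]
  | fEx v a => GenTree.Node 14 [:: GenTree.Leaf v; form_tree a]
  end.

Definition gcode (a : form) : nat := pickle (form_tree a).
Definition quote (a : form) : term := numeral (gcode a).

Definition subl (G G' : seq form) : Prop := forall a, List.In a G -> List.In a G'.

Inductive derives : seq form -> seq form -> Prop :=
| d_id a : derives [:: a] [:: a]
| d_weak G D G' D' : derives G D -> subl G G' -> subl D D' -> derives G' D'
| d_cut G D a : derives G (a :: D) -> derives (a :: G) D -> derives G D
| d_neg G D a : derives G (a :: D) -> derives (fneg a :: G) D
| d_andL G D a b : derives (a :: b :: G) D -> derives (fAnd a b :: G) D
| d_andR G D a b : derives G (a :: D) -> derives G (b :: D) -> derives G (fAnd a b :: D)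
| d_orL G D a b : derives (a :: G) D -> derives (b :: G) D -> derives (fOr a b :: G) D
| d_orR G D a b : derives G (a :: b :: D) -> derives G (fOr a b :: D)
| d_allL G D x a u : free_for u x a ->
    derives (subst x u a :: G) D -> derives (fAll x a :: G) D
| d_allR G D x a y : y \notin fvs G -> y \notin fvs D -> y \notin fv (fAll x a) ->
    free_for (tVar y) x a ->
    derives G (subst x (tVar y) a :: D) -> derives G (fAll x a :: D)
| d_exL G D x a y : y \notin fvs G -> y \notin fvs D -> y \notin fv (fEx x a) ->
    free_for (tVar y) x a ->
    derives (subst x (tVar y) a :: G) D -> derives (fEx x a :: G) D
| d_exR G D x a u : free_for u x a ->
    derives G (subst x u a :: D) -> derives G (fEx x a :: D)
| d_refl t : derives [::] [:: fEq t t]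
| d_repl G D x a s t : free_for s x a -> free_for t x a ->
    derives G (subst x t a :: D) -> derives G (fNeq s t :: subst x s a :: D)
| d_pa1 s : derives [:: fEq (tSucc s) tZero] [::]
| d_pa2 s t : derives [:: fEq (tSucc s) (tSucc t)] [:: fEq s t]
| d_pa3 s : derives [::] [:: fEq (tAdd s tZero) s]
| d_pa4 s t : derives [::] [:: fEq (tAdd s (tSucc t)) (tSucc (tAdd s t))]
| d_pa5 s : derives [::] [:: fEq (tMul s tZero) tZero]
| d_pa6 s t : derives [::] [:: fEq (tMul s (tSucc t)) (tAdd (tMul s t) s)]
(* induction rule, for all L-formulas *)
| d_ind G D x a y t : y \notin fvs G -> y \notin fvs D -> y \notin fv (fAll x a) ->
    free_for (tVar y) x a -> free_for (tSucc (tVar y)) x a -> free_for t x a ->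
    derives (subst x (tVar y) a :: G) (subst x (tSucc (tVar y)) a :: D) ->
    derives (subst x tZero a :: G) (subst x t a :: D).

Definition derives_iff (a b : form) : Prop := derives [:: a] [:: b] /\ derives [:: b] [:: a].

Definition base_paradoxical (a : form) : Prop :=
  sentence a /\
  derives_iff a (fneg (fT (quote a))) /\ derives_iff (fneg a) (fT (quote a)).

Record TP : Type := mkTP {
  Tplus : nat -> Prop; Tminus : nat -> Prop;
  Pplus : nat -> Prop; Pminus : nat -> Prop }.

Inductive sat (X : TP) : form -> Prop :=
| s_eq s t : tval s = tval t -> sat X (fEq s t)
| s_neq s t : tval s <> tval t -> sat X (fNeq s t)
| s_T t : Tplus X (tval t) -> sat X (fT t)
| s_NT t : Tminus X (tval t) -> sat X (fNT t)
| s_P t : Pplus X (tval t) -> sat X (fP t)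
| s_NP t : Pminus X (tval t) -> sat X (fNP t)
| s_and a b : sat X a -> sat X b -> sat X (fAnd a b)
| s_orl a b : sat X a -> sat X (fOr a b)
| s_orr a b : sat X b -> sat X (fOr a b)
| s_all v a : (forall n, sat X (subst v (numeral n) a)) -> sat X (fAll v a)
| s_ex v a n : sat X (subst v (numeral n) a) -> sat X (fEx v a).

(* (N,X) |=_SK  scrP(<a>), for a sentence a: the Strong Kleene satisfaction
   clauses of the jump formula scrP, unfolded (Pi is arithmetic, hence
   evaluated classically; B defines the base paradoxical codes). *)
Definition jumpP (X : TP) (a : form) : Prop :=
  (base_paradoxical a \/ base_paradoxical (fneg a))
  \/ (exists t, a = fT t /\ Pplus X (tval t))
  \/ (exists t, a = fNT t /\ Pplus X (tval t))
  \/ (exists b c, a = fAnd b c /\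
        ((Pplus X (gcode b) /\ Pplus X (gcode c)) \/
         (Tplus X (gcode b) /\ Pplus X (gcode c)) \/
         (Tplus X (gcode c) /\ Pplus X (gcode b))))
  \/ (exists b c, a = fOr b c /\
        ((Pplus X (gcode b) /\ Pplus X (gcode c)) \/
         (Tminus X (gcode b) /\ Pplus X (gcode c)) \/
         (Tminus X (gcode c) /\ Pplus X (gcode b))))
  \/ (exists v b, a = fAll v b /\
        (exists y, Pplus X (gcode (subst v (numeral y) b))) /\
        (forall y, Pplus X (gcode (subst v (numeral y) b)) \/
                   Tplus X (gcode (subst v (numeral y) b))))
  \/ (exists v b, a = fEx v b /\
        (exists y, Pplus X (gcode (subst v (numeral y) b))) /\
        (forall y, Pplus X (gcode (subst v (numeral y) b)) \/
                   Tminus X (gcode (subst v (numeral y) b)))).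

Definition codes (Q : form -> Prop) (n : nat) : Prop :=
  exists a, sentence a /\ gcode a = n /\ Q a.

Definition GammaTP (X : TP) : TP :=
  mkTP (codes (fun a => sat X a))
       (codes (fun a => sat X (fneg a)))
       (codes (fun a => jumpP X a))
       (codes (fun a => sat X (fOr a (fneg a)))).

Definition tp_le (X Y : TP) : Prop :=
  (forall n, Tplus X n -> Tplus Y n) /\ (forall n, Tminus X n -> Tminus Y n) /\
  (forall n, Pplus X n -> Pplus Y n) /\ (forall n, Pminus X n -> Pminus Y n).
Definition tp_eq (X Y : TP) : Prop := tp_le X Y /\ tp_le Y X.
Definition tp_bot : TP :=
  mkTP (fun _ => False) (fun _ => False) (fun _ => False) (fun _ => False).
Definition tp_union (I : Type) (F : I -> TP) (J : I -> Prop) : TP :=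
  mkTP (fun n => exists i, J i /\ Tplus (F i) n)
       (fun n => exists i, J i /\ Tminus (F i) n)
       (fun n => exists i, J i /\ Pplus (F i) n)
       (fun n => exists i, J i /\ Pminus (F i) n).

Definition well_order (A : Type) (lt : A -> A -> Prop) : Prop :=
  well_founded lt /\
  (forall x y z, lt x y -> lt y z -> lt x z) /\
  (forall x y, lt x y \/ x = y \/ lt y x).

Definition is_succ_of (A : Type) (lt : A -> A -> Prop) (b a : A) : Prop :=
  lt b a /\ forall c, lt b c -> lt c a -> False.

Definition is_limit (A : Type) (lt : A -> A -> Prop) (a : A) : Prop :=
  (exists b, lt b a) /\ forall b, lt b a -> exists c, lt b c /\ lt c a.

Definition TP_sequence (A : Type) (lt : A -> A -> Prop) (s : A -> TP) : Prop :=
  (forall a, (forall b, ~ lt b a) -> tp_eq (s a) tp_bot) /\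
  (forall a b, is_succ_of lt b a -> tp_eq (s a) (GammaTP (s b))) /\
  (forall a, is_limit lt a -> tp_eq (s a) (tp_union s (fun b => lt b a))).

(** [GammaTP] is monotone, because Strong Kleene satisfaction and the clauses
    of the jump only use positive information about [T] and [P].  For any
    monotone [F], the least class of partial models closed under [F] and under
    arbitrary unions (the tower) is well ordered by strict inclusion
    (Bourbaki-Witt).  In this well-ordering the first stage is empty, the
    successor of a stage is its image under [F] and a limit stage is the union
    of its predecessors, so the tower is the transfinite iteration of [F].  Its
    union is again a stage, hence fixed by [F], and every stage lies below every
    pre-fixed point, so this fixed point is the least one. *)

From Stdlib Require Import Classical FunctionalExtensionality PropExtensionality ProofIrrelevance.

Lemma tp_le_refl X : tp_le X X.
Proof. unfold tp_le; repeat split; auto. Qed.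

Lemma tp_le_trans X Y Z : tp_le X Y -> tp_le Y Z -> tp_le X Z.
Proof. intros (a & b & c & d) (a' & b' & c' & d'); repeat split; auto. Qed.

Lemma tp_le_antisym X Y : tp_le X Y -> tp_le Y X -> X = Y.
Proof.
  destruct X, Y; intros (h1 & h2 & h3 & h4) (k1 & k2 & k3 & k4); simpl in *.
  f_equal; apply functional_extensionality; intro n;
    apply propositional_extensionality; split; auto.
Qed.

Lemma tp_eq_of_eq X Y : X = Y -> tp_eq X Y.
Proof. intros ->; split; apply tp_le_refl. Qed.

Lemma tp_bot_le X : tp_le tp_bot X.
Proof. repeat split; intros n []. Qed.

Lemma tp_union_ub {I} (F : I -> TP) (J : I -> Prop) i : J i -> tp_le (F i) (tp_union F J).
Proof. intro Ji; repeat split; intros n H; exists i; auto. Qed.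

Lemma tp_union_lub {I} (F : I -> TP) (J : I -> Prop) Z :
  (forall i, J i -> tp_le (F i) Z) -> tp_le (tp_union F J) Z.
Proof.
  intro H; repeat split; intros n [i [Ji Hn]]; destruct (H i Ji) as (h1 & h2 & h3 & h4); auto.
Qed.

Lemma tp_union_empty {I} (F : I -> TP) : tp_union F (fun _ => False) = tp_bot.
Proof. apply tp_le_antisym; [apply tp_union_lub; intros i [] | apply tp_bot_le]. Qed.

Lemma sat_mono X Y a : tp_le X Y -> sat X a -> sat Y a.
Proof.
  intros (h1 & h2 & h3 & h4) H; induction H; try (econstructor; eauto; fail); apply s_all; auto.
Qed.

Lemma jumpP_mono X Y a : tp_le X Y -> jumpP X a -> jumpP Y a.
Proof.
  intros (h1 & h2 & h3 & h4); unfold jumpP.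
  intros [H | [[t [e p]] | [[t [e p]] | [[b [c [e p]]] | [[b [c [e p]]]
    | [[v [b [e [[y p] q]]]] | [v [b [e [[y p] q]]]]]]]]]].
  - left; exact H.
  - right; left; eauto.
  - do 2 right; left; eauto.
  - do 3 right; left; exists b, c; intuition.
  - do 4 right; left; exists b, c; intuition.
  - do 5 right; left; exists v, b; split; [exact e | split; [eauto | intro z; destruct (q z); auto]].
  - do 6 right; exists v, b; split; [exact e | split; [eauto | intro z; destruct (q z); auto]].
Qed.

Lemma GammaTP_mono X Y : tp_le X Y -> tp_le (GammaTP X) (GammaTP Y).
Proof.
  intro H; repeat split; intros n [a [Sa [Ea Qa]]];
    exists a; eauto using sat_mono, jumpP_mono.
Qed.

Section MonotoneTower.

Variable F : TP -> TP.
Hypothesis F_mono : forall X Y, tp_le X Y -> tp_le (F X) (F Y).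

Inductive tower : TP -> Prop :=
| tower_step X : tower X -> tower (F X)
| tower_union (I : Type) (G : I -> TP) (J : I -> Prop) :
    (forall i, J i -> tower (G i)) -> tower (tp_union G J).

Lemma tower_bot : tower tp_bot.
Proof. rewrite <- (tp_union_empty (fun X : TP => X)); apply tower_union; intros i []. Qed.

Lemma tower_le_step X : tower X -> tp_le X (F X).
Proof.
  induction 1 as [X _ IH | I G J _ IH].
  - apply F_mono, IH.
  - apply tp_union_lub; intros i Ji.
    apply tp_le_trans with (F (G i)); [apply IH, Ji | apply F_mono, tp_union_ub, Ji].
Qed.

Lemma tower_le_prefixpoint {Y} : tp_le (F Y) Y -> forall X, tower X -> tp_le X Y.
Proof.
  intros HY X TX; induction TX as [X _ IH | I G J _ IH].
  - apply tp_le_trans with (F Y); auto.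
  - apply tp_union_lub; auto.
Qed.

Definition extreme (c : TP) : Prop :=
  forall X, tower X -> tp_le X c -> X <> c -> tp_le (F X) c.

Lemma extreme_split {c X} : tower c -> extreme c -> tower X ->
  tp_le X c \/ tp_le (F c) X.
Proof.
  intros Tc Ec TX; induction TX as [X TX IH | I G J _ IH].
  - destruct IH as [H | H].
    + destruct (classic (X = c)) as [-> | ne]; [right; apply tp_le_refl | left; auto].
    + right; apply tp_le_trans with X; [exact H | apply tower_le_step, TX].
  - destruct (classic (exists i, J i /\ tp_le (F c) (G i))) as [[i [Ji H]] | N].
    + right; apply tp_le_trans with (G i); [exact H | apply tp_union_ub, Ji].
    + left; apply tp_union_lub; intros i Ji.
      destruct (IH i Ji) as [H | H]; [exact H | exfalso; eauto].
Qed.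

Lemma tower_extreme {c} : tower c -> extreme c.
Proof.
  induction 1 as [c Tc IH | I G J TG IH]; intros X TX Hle Hne.
  - destruct (extreme_split Tc IH TX) as [H | H].
    + destruct (classic (X = c)) as [-> | ne]; [apply tp_le_refl |].
      apply tp_le_trans with c; [apply IH; auto | apply tower_le_step, Tc].
    + exfalso; apply Hne, tp_le_antisym; assumption.
  - destruct (classic (exists i, J i /\ tp_le X (G i) /\ X <> G i))
      as [[i [Ji [H1 H2]]] | N].
    + apply tp_le_trans with (G i); [apply (IH i Ji); auto | apply tp_union_ub, Ji].
    + exfalso; apply Hne, tp_le_antisym; [exact Hle |].
      apply tp_union_lub; intros i Ji.
      destruct (extreme_split (TG i Ji) (IH i Ji) TX) as [H | H].
      * destruct (classic (X = G i)) as [-> | ne]; [apply tp_le_refl | exfalso; eauto].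
      * apply tp_le_trans with (F (G i)); [apply tower_le_step, TG, Ji | exact H].
Qed.

Lemma tower_split {c X} : tower c -> tower X -> tp_le X c \/ tp_le (F c) X.
Proof. intros Tc TX; exact (extreme_split Tc (tower_extreme Tc) TX). Qed.

Lemma tower_total {X Y} : tower X -> tower Y -> tp_le X Y \/ tp_le Y X.
Proof.
  intros TX TY; destruct (tower_split TY TX) as [H | H]; [left; exact H |].
  right; apply tp_le_trans with (F Y); [apply tower_le_step, TY | exact H].
Qed.

Definition stage : Type := {X : TP | tower X}.

Definition stage_lt (a b : stage) : Prop :=
  tp_le (proj1_sig a) (proj1_sig b) /\ proj1_sig a <> proj1_sig b.

Lemma stage_eq (a b : stage) : proj1_sig a = proj1_sig b -> a = b.
Proof. apply eq_sig_hprop; intros; apply proof_irrelevance. Qed.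

Lemma stage_lt_wf : well_founded stage_lt.
Proof.
  enough (H : forall X, tower X -> forall a : stage, tp_le (proj1_sig a) X -> Acc stage_lt a).
  { intro a; exact (H _ (proj2_sig a) a (tp_le_refl _)). }
  induction 1 as [X TX IH | I G J TG IH]; intros a Ha; constructor; intros b [Hba Hne].
  - apply IH.
    destruct (tower_split TX (proj2_sig b)) as [H | H]; [exact H |].
    exfalso; apply Hne, tp_le_antisym; [exact Hba |].
    apply tp_le_trans with (F X); assumption.
  - destruct (classic (exists i, J i /\ ~ tp_le (G i) (proj1_sig b))) as [[i [Ji H]] | N].
    + apply (IH i Ji).
      destruct (tower_total (proj2_sig b) (TG i Ji)) as [H' | H']; [exact H' | contradiction].
    + exfalso; apply Hne, tp_le_antisym; [exact Hba |].
      apply tp_le_trans with (tp_union G J); [exact Ha |].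
      apply tp_union_lub; intros i Ji; apply NNPP; eauto.
Qed.

Lemma stage_well_order : well_order stage_lt.
Proof.
  split; [exact stage_lt_wf | split].
  - intros a b c [Hab Nab] [Hbc _]; split; [eapply tp_le_trans; eauto |].
    intro e; apply Nab, tp_le_antisym; [exact Hab | rewrite e; exact Hbc].
  - intros a b.
    destruct (classic (proj1_sig a = proj1_sig b)) as [e | ne].
    + right; left; apply stage_eq, e.
    + destruct (tower_total (proj2_sig a) (proj2_sig b)) as [H | H].
      * left; split; auto.
      * right; right; split; auto.
Qed.

Lemma stage_zero {a : stage} : (forall b, ~ stage_lt b a) -> proj1_sig a = tp_bot.
Proof.
  intro Ha; apply NNPP; intro ne.
  apply (Ha (exist _ tp_bot tower_bot)); split; [apply tp_bot_le | auto].
Qed.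

Lemma stage_succ {a b : stage} : is_succ_of stage_lt b a -> proj1_sig a = F (proj1_sig b).
Proof.
  intros [[Hba Nba] Hnext].
  assert (Tb := proj2_sig b).
  assert (HFb : tp_le (F (proj1_sig b)) (proj1_sig a)).
  { destruct (tower_split Tb (proj2_sig a)) as [H | H]; [| exact H].
    exfalso; apply Nba, tp_le_antisym; assumption. }
  apply NNPP; intro ne.
  destruct (classic (proj1_sig b = F (proj1_sig b))) as [e | ne'].
  - apply Nba, tp_le_antisym; [exact Hba |].
    apply tower_le_prefixpoint; [rewrite <- e; apply tp_le_refl | exact (proj2_sig a)].
  - apply (Hnext (exist _ _ (tower_step _ Tb))); split; simpl; auto.
    apply tower_le_step, Tb.
Qed.

Lemma stage_limit {a : stage} : is_limit stage_lt a ->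
  proj1_sig a = tp_union (@proj1_sig _ _) (fun b => stage_lt b a).
Proof.
  intros [_ Hlim].
  set (U := tp_union (@proj1_sig _ _) (fun b => stage_lt b a)).
  assert (TU : tower U) by (apply tower_union; intros b _; exact (proj2_sig b)).
  assert (HU : tp_le U (proj1_sig a)) by (apply tp_union_lub; intros b [H _]; exact H).
  apply tp_le_antisym; [| exact HU].
  apply NNPP; intro N.
  destruct (Hlim (exist _ U TU)) as [c [[HUc NUc] Hca]].
  { split; [exact HU | intro e; apply N; simpl in e; rewrite <- e; apply tp_le_refl]. }
  apply NUc, tp_le_antisym; [exact HUc |].
  exact (tp_union_ub (@proj1_sig _ _) (fun b => stage_lt b a) c Hca).
Qed.

Definition tower_top : TP := tp_union (fun X : TP => X) tower.

Lemma tower_tower_top : tower tower_top.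
Proof. apply tower_union; auto. Qed.

Lemma tower_top_fixed : F tower_top = tower_top.
Proof.
  apply tp_le_antisym.
  - apply (tp_union_ub (fun X : TP => X)), tower_step, tower_tower_top.
  - apply tower_le_step, tower_tower_top.
Qed.

Lemma tower_top_least {Y} : tp_le (F Y) Y -> tp_le tower_top Y.
Proof. intro HY; apply tp_union_lub; exact (tower_le_prefixpoint HY). Qed.

End MonotoneTower.

Theorem mainTheorem2 :
  exists (A : Type) (lt : A -> A -> Prop) (s : A -> TP) (a : A),
    well_order lt /\ TP_sequence lt s /\
    tp_eq (GammaTP (s a)) (s a) /\
    (forall Y : TP, tp_eq (GammaTP Y) Y -> tp_le (s a) Y).
Proof.
  exists (stage GammaTP), (stage_lt GammaTP), (@proj1_sig _ _),
    (exist _ _ (tower_tower_top GammaTP)).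
  split; [| split; [| split]].
  - exact (stage_well_order _ GammaTP_mono).
  - split; [| split].
    + intros a Ha; apply tp_eq_of_eq, stage_zero, Ha.
    + intros a b Hab; apply tp_eq_of_eq, (stage_succ _ GammaTP_mono Hab).
    + intros a Ha; apply tp_eq_of_eq, (stage_limit _ Ha).
  - apply tp_eq_of_eq, (tower_top_fixed _ GammaTP_mono).
  - intros Y [HY _]; exact (tower_top_least _ GammaTP_mono HY).
Qed.
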